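(* Let $\mathbb{X}^1,\dots,\mathbb{X}^N$ be filtered processes, $\pi\in{\rm cpl}_{\rm mc}(\mathbb{X}^1,\dots,\mathbb{X}^N)$ and $I\subseteq\{1,\dots,N\}$ nonempty. Then ${\rm proj}^I_\#\pi\in{\rm cpl}_{\rm mc}((\mathbb{X}^i)_{i\in I})$, where ${\rm proj}^I:\prod_{i=1}^N\Omega^i\to\prod_{i\in I}\Omega^i$ is the coordinate projection.
   Context: Fix positive integers $T,N$. A filtered process is $\mathbb{X}=(\Omega,{\cal F},\mathbb{F},\mathbb{P},X)$ with $\Omega=\prod_{t=1}^T\Omega_t$ ($\Omega_t$ Polish), $\mathbb{F}=({\cal F}_t)_{t=1}^T$ the canonical filtration (${\cal F}_t$ generated by $\omega_{1:t}$, ${\cal F}_0$ trivial), ${\cal F}={\cal F}_T$, and $X$ an adapted process. For a finite family $(\mathbb{X}^i)_{i\in J}$, $\mathbb{X}^i=(\Omega^i,{\cal F}^i,\mathbb{F}^i,\mathbb{P}^i,X^i)$, write for $v\in\{0,\dots,T\}^J$ $\overline{\cal F}_v=\bigotimes_{i\in J}{\cal F}^i_{v_i}$, $\overline{\cal F}_t=\bigotimes_{i\in J}{\cal F}^i_t$, and $e_i$ for unit vectors. ${\rm cpl}_{\rm mc}((\mathbb{X}^i)_{i\in J})$ is the set of probabilities on $\prod_{i\in J}\Omega^i$ with marginals $\mathbb{P}^i$ such that for all $t\in\{1,\dots,T\}$ and $i\in J$, under $\pi$, $\overline{\cal F}_{Te_i}$ is conditionally independent of $\overline{\cal F}_t$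 given $\overline{\cal F}_{te_i}$. *)

From HB Require Import structures.
From mathcomp Require Import all_boot all_order all_algebra.
From mathcomp Require Import all_classical all_reals all_analysis.
Unset Printing Implicit Defensive.
Import Order.TTheory GRing.Theory Num.Theory.
Import numFieldNormedType.Exports.
Local Open Scope classical_set_scope.
Local Open Scope ring_scope.

Definition polish (R : realType) (S : topologicalType) : Prop :=
  (exists D : set S, countable D /\ closure D = setT) /\
  exists d : S -> S -> R,
    [/\ (forall x y, d x y = 0 <-> x = y),
        (forall x y, d x y = d y x),
        (forall x y z, d x z <= d x y + d y z),
        (forall U : set S, open U <->
           (forall x, U x -> exists2 e : R, 0 < e & [set y | d x y < e] `<=` U))
      & (forall u : nat -> S,
           (forall e : R, 0 < e -> exists M : nat, forall m n : nat,
               (M <= m)%N -> (M <= n)%N -> d (u m) (u n) < e) ->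
           exists l : S, u @ \oo --> l)].

Definition borel_sets {S : topologicalType} : set (set S) := <<s open >>.

Definition dprod {K : Type} (F : K -> pointedType) := forall k, F k.
HB.instance Definition _ (K : Type) (F : K -> pointedType) :=
  gen_eqMixin (dprod F).
HB.instance Definition _ (K : Type) (F : K -> pointedType) :=
  gen_choiceMixin (dprod F).
HB.instance Definition _ (K : Type) (F : K -> pointedType) :=
  isPointed.Build (dprod F) (fun k => point).

(* Omega = prod_{t=1}^T Omega_t; the coordinate s : 'I_T is omega_{s+1}. *)
Definition path_space {T : nat} (Om : 'I_T -> ptopologicalType) : pointedType :=
  dprod Om.

(* Generators of the canonical filtration F_t = sigma(omega_{1:t}),
   t in {0,..,T}: preimages of Borel sets under omega |-> omega_{s+1}, s < t. *)
Definition filt_gen {T : nat} (Om : 'I_T -> ptopologicalType) (t : nat)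
  : set (set (path_space Om)) :=
  [set S | exists (s : 'I_T) (B : set (Om s)),
     [/\ (s < t)%N, borel_sets B & S = [set w : path_space Om | B (w s)]]].

Definition filt {T : nat} (Om : 'I_T -> ptopologicalType) (t : nat)
  : set (set (path_space Om)) := <<s (filt_gen Om t) >>.

Definition proc_space {T : nat} (Om : 'I_T -> ptopologicalType) :=
  g_sigma_algebraType (filt_gen Om T).

Definition joint_pt {T : nat} {J : finType} (Om : J -> 'I_T -> ptopologicalType)
  : pointedType := dprod (fun j => path_space (Om j)).

(* overline F_v = tensor_{j in J} F^j_{v_j}: the product sigma-algebra,
   generated by the sets {omega | omega^j in A}, A in F^j_{v_j}. *)
Definition Fbar {T : nat} {J : finType} (Om : J -> 'I_T -> ptopologicalType)
  (v : J -> nat) : set (set (joint_pt Om)) :=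
  <<s [set S | exists (j : J) (A : set (path_space (Om j))),
         filt (Om j) (v j) A /\ S = [set w : joint_pt Om | A (w j)]] >>.

Definition joint_space {T : nat} {J : finType} (Om : J -> 'I_T -> ptopologicalType) :=
  g_sigma_algebraType
    [set S | exists (j : J) (A : set (path_space (Om j))),
         filt (Om j) T A /\ S = [set w : joint_pt Om | A (w j)]].

Definition unitv {J : finType} (i : J) (t : nat) : J -> nat :=
  fun j => if j == i then t else 0%N.

Section condindep.
Context {R : realType} {d : measure_display} {X : measurableType d}.

Definition cond_prob (P : probability X R) (G : set (set X)) (a : set X)
  (f : X -> R) : Prop :=
  (forall Y : set R, measurable Y -> G (f @^-1` Y)) /\
  (forall g, G g -> (\int[P]_(x in g) (f x)%:E = P (a `&` g))%E).

(* A and B are conditionally independent given G under P: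
   P(a /\ b | G) = P(a | G) P(b | G) a.s. for all a in A, b in B. *)
Definition cond_indep (P : probability X R) (A B G : set (set X)) : Prop :=
  forall a b, A a -> B b ->
    exists fa fb : X -> R,
      [/\ cond_prob P G a fa, cond_prob P G b fb &
          forall g, G g ->
            (\int[P]_(x in g) (fa x * fb x)%:E = P (a `&` b `&` g))%E].
End condindep.

Definition cpl_mc {R : realType} {T : nat} {J : finType}
  {Om : J -> 'I_T -> ptopologicalType}
  (P : forall j : J, probability (proc_space (Om j)) R)
  (pi : probability (joint_space Om) R) : Prop :=
  (forall (j : J) (A : set (proc_space (Om j))), measurable A ->
     pi [set w : joint_space Om | A (w j)] = P j A) /\
  (forall (t : nat) (i : J), (1 <= t <= T)%N ->
     cond_indep pi (Fbar Om (unitv i T)) (Fbar Om (fun _ => t))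
                   (Fbar Om (unitv i t))).

Definition proj_sub {T N : nat} (Om : 'I_N -> 'I_T -> ptopologicalType)
  (I : {set 'I_N}) (w : joint_space Om)
  : joint_space (fun j : {i : 'I_N | i \in I} => Om (val j)) :=
  fun j => w (val j).

From HB Require Import structures.
From mathcomp Require Import all_boot all_order all_algebra.
From mathcomp Require Import all_classical all_reals all_analysis.
From mathcomp Require Import measurable_realfun.
Import Order.TTheory GRing.Theory Num.Theory.
Local Open Scope classical_set_scope.
Local Open Scope ring_scope.

(* The image coupling has, as versions of its conditional probabilities, the
   original versions precomposed with the section [ext_path] of the projection.
   A version given [Fbar (unitv i t)] depends only on the [i]-th path, which the
   projection keeps, so precomposing with [ext_path \o proj_sub] does not change
   it; and every set of the projected filtrations pulls back under the
   projection to the corresponding set of the full one, so the defining integral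
   identities transfer by change of variables. *)

Lemma preimage_g_sigma_sub {A B : Type} (f : A -> B) (G : set (set B))
    (H : set (set A)) :
  (forall S, G S -> <<s H >> (f @^-1` S)) ->
  forall S, <<s G >> S -> <<s H >> (f @^-1` S).
Proof.
move=> GH; apply: (@smallest_sub _ (sigma_algebra setT) G
  [set S | <<s H >> (f @^-1` S)]) => //.
split=> /=.
- by rewrite preimage_set0; exact: sigma_algebra0.
- by move=> S HS; rewrite setTD -preimage_setC -setTD; exact: sigma_algebraCD.
- by move=> F HF; rewrite preimage_bigcup; exact: sigma_algebra_bigcup.
Qed.

Lemma g_sigma_invariant {A : Type} (r : A -> A -> Prop) (G : set (set A)) :
  (forall x y, r x y -> r y x) ->
  (forall S, G S -> forall x y, r x y -> S x -> S y) ->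
  forall S, <<s G >> S -> forall x y, r x y -> S x -> S y.
Proof.
move=> r_sym GS; apply: (@smallest_sub _ (sigma_algebra setT) G
  [set S | forall x y, r x y -> S x -> S y]) => //.
split=> //=.
- move=> S HS x y rxy [_ nSx]; split=> // Sy.
  by apply: nSx; exact: (HS y x (r_sym _ _ rxy) Sy).
- by move=> F HF x y rxy [n _ Fx]; exists n => //; exact: (HF n x y rxy).
Qed.

Lemma filt0_const {T : nat} {Om : 'I_T -> ptopologicalType}
    {A : set (path_space Om)} :
  filt Om 0 A -> forall x y, A x -> A y.
Proof.
move=> FA x y; apply: (@g_sigma_invariant _ (fun _ _ => True) (filt_gen Om 0)) => //.
by move=> S [s [B []]].
Qed.

Lemma filt_le {T : nat} (Om : 'I_T -> ptopologicalType) (s t : nat) :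
  (s <= t)%N -> filt Om s `<=` filt Om t.
Proof.
move=> st; apply: sub_sigma_algebra2 => S [u [B [us BB ->]]].
by exists u, B; split=> //; exact: leq_trans us st.
Qed.

Lemma Fbar_measurable {T : nat} {J : finType} (Om : J -> 'I_T -> ptopologicalType)
    (v : J -> nat) : (forall j, (v j <= T)%N) ->
  forall S, Fbar Om v S -> measurable (S : set (joint_space Om)).
Proof.
move=> vT; apply: sub_sigma_algebra2 => S [j [A [FA ->]]].
by exists j, A; split=> //; exact: filt_le (vT j) _ FA.
Qed.

Lemma Fbar_unitv_invariant {T : nat} {J : finType}
    {Om : J -> 'I_T -> ptopologicalType} {i : J} {t : nat} {S} :
  Fbar Om (unitv i t) S ->
  forall w w' : joint_pt Om, w i = w' i -> S w -> S w'.
Proof.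
move=> FS; apply: (@g_sigma_invariant _ (fun w w' : joint_pt Om => w i = w' i)
  _ _ _ S FS) => [w w' -> //|].
move=> _ [j [A [FA ->]]] w w' /= ww'.
have [ji | nji] := eqVneq j i; first by subst j; rewrite ww'.
by move: FA; rewrite /unitv (negbTE nji) => /filt0_const; apply.
Qed.

Definition measurable_wrt {X : Type} {R : realType} (G : set (set X))
    (f : X -> R) :=
  forall Y : set R, measurable Y -> G (f @^-1` Y).

Lemma integral_pushforwardE d d' (X : measurableType d) (Y : measurableType d')
    (R : realType) (mu : {measure set X -> \bar R}) (phi : {mfun X >-> Y})
    D (f : Y -> \bar R) :
  measurable D -> measurable_fun setT f ->
  (\int[pushforward mu phi]_(y in D) f y =
   \int[mu]_(x in phi @^-1` D) f (phi x))%E.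
Proof.
move=> mD mf; have mphi := measurable_funPT phi.
rewrite [RHS]integralE.
under [X in (X - _)%E]eq_integral do rewrite funepos_comp.
under [X in (_ - X)%E]eq_integral do rewrite funeneg_comp.
rewrite -[X in _ = (X - _)%E]ge0_integral_pushforward //; last first.
  exact/measurable_funepos/measurable_funTS.
rewrite -[X in _ = (_ - X)%E]ge0_integral_pushforward //; last first.
  exact/measurable_funeneg/measurable_funTS.
by rewrite [LHS]integralE.
Qed.

Section pushforward_along_section.
Local Open Scope ereal_scope.
Context d d' (X : measurableType d) (Y : measurableType d') (R : realType).
Variables (mu : probability X R) (phi : {mfun X >-> Y}) (e : Y -> X).
Variables (G : set (set Y)) (H : set (set X)).
Hypotheses (G_measurable : G `<=` measurable)
  (preimage_GH : forall g, G g -> H (phi @^-1` g))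
  (preimage_HG : forall h, H h -> G (e @^-1` h))
  (H_invariant : forall h x, H h -> h x -> h (e (phi x))).

Lemma measurable_wrt_section (f : X -> R) :
  measurable_wrt H f -> measurable_wrt G (f \o e).
Proof. by move=> Hf B mB; rewrite comp_preimage; exact/preimage_HG/Hf. Qed.

Lemma measurable_fun_section (f : X -> R) :
  measurable_wrt H f -> measurable_fun setT (f \o e).
Proof.
move=> Hf _ B mB; rewrite setTI.
exact/G_measurable/measurable_wrt_section.
Qed.

Lemma section_projK (f : X -> R) : measurable_wrt H f ->
  forall x, f (e (phi x)) = f x.
Proof.
move=> Hf x.
by apply: (@H_invariant (f @^-1` [set f x]) x); [exact: Hf | rewrite /preimage].
Qed.

Lemma integral_section_pushforward (f : X -> R) g :
  measurable_wrt H f -> G g ->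
  \int[distribution mu phi]_(y in g) (f (e y))%:E =
  \int[mu]_(x in phi @^-1` g) (f x)%:E.
Proof.
move=> Hf Gg; rewrite integral_pushforwardE; last first.
- exact/measurable_EFinP/measurable_fun_section.
- exact: G_measurable.
by apply: eq_integral => x _; rewrite section_projK.
Qed.

Lemma cond_prob_pushforward a (f : X -> R) :
  cond_prob mu H (phi @^-1` a) f -> cond_prob (distribution mu phi) G a (f \o e).
Proof.
move=> [Hf intf]; split; first exact: measurable_wrt_section.
by move=> g Gg; rewrite integral_section_pushforward // intf //; exact: preimage_GH.
Qed.

Lemma cond_indep_pushforward (A B : set (set Y)) (A' B' : set (set X)) :
  (forall a, A a -> A' (phi @^-1` a)) -> (forall b, B b -> B' (phi @^-1` b)) ->
  cond_indep mu A' B' H -> cond_indep (distribution mu phi) A B G.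
Proof.
move=> AA' BB' indep a b Aa Bb.
have [fa [fb [fa_cond fb_cond intfab]]] := indep _ _ (AA' _ Aa) (BB' _ Bb).
have [Hfa _] := fa_cond; have [Hfb _] := fb_cond.
exists (fa \o e), (fb \o e); split; try exact: cond_prob_pushforward.
move=> g Gg; rewrite integral_pushforwardE; last first.
- by apply/measurable_EFinP/measurable_funM; exact: measurable_fun_section.
- exact: G_measurable.
under eq_integral do rewrite /= (section_projK _ Hfa) (section_projK _ Hfb).
by rewrite intfab //; exact: preimage_GH.
Qed.

End pushforward_along_section.

Section projection.
Context {T N : nat} (Om : 'I_N -> 'I_T -> ptopologicalType) (I : {set 'I_N}).
Local Notation J := {i : 'I_N | i \in I}.
Local Notation OmI := (fun j : J => Om (val j)).

Definition ext_path (w : joint_pt OmI) : joint_pt Om := fun k =>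
  if pselect (k \in I) is left kI then w (exist _ k kI) else point.

Lemma ext_path_in {k} (kI : k \in I) w : ext_path w k = w (exist _ k kI).
Proof.
by rewrite /ext_path; case: pselect => // kI'; rewrite (bool_irrelevance kI' kI).
Qed.

Lemma ext_path_notin {k} (kI : k \notin I) w : ext_path w k = point.
Proof. by rewrite /ext_path; case: pselect => // kI'; rewrite kI' in kI. Qed.

Lemma ext_path_proj_sub (w : joint_pt Om) (j : J) :
  ext_path (proj_sub Om I w) (val j) = w (val j).
Proof. by case: j => k kI; rewrite /= (ext_path_in kI). Qed.

Lemma Fbar_proj_sub_preimage (v : J -> nat) (v' : 'I_N -> nat) :
  (forall j, v j = v' (val j)) ->
  forall S, Fbar OmI v S -> Fbar Om v' (proj_sub Om I @^-1` S).
Proof.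
move=> vv'; apply: preimage_g_sigma_sub => _ [j [A [FA ->]]].
by apply: sub_sigma_algebra; exists (val j), A; rewrite -vv'.
Qed.

Lemma Fbar_ext_path_preimage (v : J -> nat) (v' : 'I_N -> nat) :
  (forall j, v j = v' (val j)) ->
  forall S, Fbar Om v' S -> Fbar OmI v (ext_path @^-1` S).
Proof.
move=> vv'; apply: preimage_g_sigma_sub => _ [k [A [FA ->]]].
have [kI | kI] := boolP (k \in I).
  apply: sub_sigma_algebra; exists (exist _ k kI), A; rewrite vv'; split=> //.
  by apply/funext => w /=; rewrite (ext_path_in kI).
have -> : ext_path @^-1` [set w | A (w k)] = if `[< A point >] then setT else set0.
  apply/funext => w /=; rewrite (ext_path_notin kI).
  by case: (asboolP (A point)) => Ap; apply/propext.
case: ifP => _; last exact: sigma_algebra0.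
by rewrite -{2}[setT]setD0; apply: sigma_algebraCD; exact: sigma_algebra0.
Qed.

Lemma measurable_proj_sub : measurable_fun setT (proj_sub Om I).
Proof.
move=> _ S mS; rewrite setTI; move: S mS.
apply: preimage_g_sigma_sub => _ [j [A [FA ->]]].
by apply: sub_sigma_algebra; exists (val j), A.
Qed.

End projection.

Theorem lemmaA2 (R : realType) (T N : nat) (HT : (0 < T)%N) (HN : (0 < N)%N)
  (Om : 'I_N -> 'I_T -> ptopologicalType)
  (Hpolish : forall (i : 'I_N) (t : 'I_T), polish R (Om i t))
  (P : forall i : 'I_N, probability (proc_space (Om i)) R)
  (dX : 'I_N -> measure_display) (S : forall i : 'I_N, measurableType (dX i))
  (X : forall (i : 'I_N) (t : 'I_T), proc_space (Om i) -> S i)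
  (Xadapted : forall (i : 'I_N) (t : 'I_T) (B : set (S i)), measurable B ->
      filt (Om i) t.+1 (X i t @^-1` B))
  (pi : probability (joint_space Om) R)
  (Hpi : cpl_mc P pi)
  (I : {set 'I_N}) (HI : exists i : 'I_N, i \in I) :
  exists nu : probability (joint_space (fun j : {i : 'I_N | i \in I} => Om (val j))) R,
    (forall A, measurable A -> nu A = pi (proj_sub Om I @^-1` A)) /\
    cpl_mc (fun j : {i : 'I_N | i \in I} => P (val j)) nu.
Proof.
pose p : {mfun _ >-> _} := HB.pack (proj_sub Om I)
  (isMeasurableFun.Build _ _ _ _ _ (measurable_proj_sub Om I)).
exists (distribution pi p); split=> //.
have [marginals indep] := Hpi; split=> [j A mA | t i tT]; first exact: marginals.
have unitv_val s j : unitv i s j = unitv (val i) s (val j) by rewrite /unitv val_eqE.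
apply: (@cond_indep_pushforward _ _ _ _ _ _ p (ext_path Om I))
  (indep t (val i) tT).
- apply: Fbar_measurable => j; rewrite /unitv; case: ifP => // _.
  by case/andP: tT.
- exact: Fbar_proj_sub_preimage (unitv_val t).
- exact: Fbar_ext_path_preimage (unitv_val t).
- move=> h w Fh; apply: (Fbar_unitv_invariant Fh).
  exact/esym/ext_path_proj_sub.
- exact: Fbar_proj_sub_preimage (unitv_val T).
- exact: Fbar_proj_sub_preimage (fun _ => erefl).
Qed.
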